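(* Let $\sigma>0$, $\lambda>0$, $\kappa_1\in(0,1)$ and $t_1\in(0,\sigma)$. For every $\gamma_1\ge\kappa_1/(\sigma-t_1)$, any solution $(x(t),y(t))$ on $[0,\sigma]$ of the system \[ x'=y,\qquad y'=-\lambda a^+(t)g(x) \] with $x(t_1)\le\kappa_1$ and $y(t_1)\le-\gamma_1$ satisfies $x(\sigma)\le0$ and $y(\sigma)\le-\gamma_1$.
   Context: $a\in L^1(0,\sigma)$ is a real function with positive part $a^+$. $g\colon\mathbb{R}\to[0,+\infty)$ is the extension by zero outside $[0,1]$ of a locally Lipschitz continuous function $g\colon[0,1]\to[0,+\infty)$ with $g(0)=g(1)=0$, $g(s)>0$ for $0<s<1$ and $\lim_{s\to0^+}g(s)/s=0$. Solutions are in the Carathéodory sense. *)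

From HB Require Import structures.
From mathcomp Require Import all_boot all_order all_algebra.
From mathcomp Require Import all_classical all_reals all_analysis.
Set Implicit Arguments. Unset Strict Implicit. Unset Printing Implicit Defensive.
Import Order.TTheory GRing.Theory Num.Theory.
Import numFieldNormedType.Exports.
Local Open Scope classical_set_scope.
Local Open Scope ring_scope.

Definition pospart (R : realType) (a : R -> R) : R -> R :=
  fun t => Num.max (a t) 0.

(* g : [0,1] -> [0,+oo) locally Lipschitz, extended by zero outside [0,1] *)
Definition locally_lipschitz_on01 (R : realType) (g : R -> R) : Prop :=
  forall s, 0 <= s <= 1 ->
    exists (d L : R), 0 < d /\
      forall u v, 0 <= u <= 1 -> 0 <= v <= 1 ->
        `|u - s| < d -> `|v - s| < d ->
        `|g u - g v| <= L * `|u - v|.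

Definition admissible_g (R : realType) (g : R -> R) : Prop :=
  [/\ (forall s, s < 0 \/ 1 < s -> g s = 0),
      (forall s, 0 <= s <= 1 -> 0 <= g s),
      locally_lipschitz_on01 g,
      g 0 = 0 /\ g 1 = 0 &
      (forall s, 0 < s < 1 -> 0 < g s) /\
      (g s / s @[s --> 0^'+] --> 0)].

(* Caratheodory solution on [0,sigma] of x' = y, y' = - lambda a^+(t) g(x),
   written in the equivalent integral form (x, y absolutely continuous with
   the equations holding a.e.). *)
Definition caratheodory_solution (R : realType) (sigma lambda : R)
    (a g x y : R -> R) : Prop :=
  [/\ (@lebesgue_measure R).-integrable `[0, sigma] (EFin \o y),
      (@lebesgue_measure R).-integrable `[0, sigma]
         (fun s => (lambda * pospart a s * g (x s))%:E) &
      forall t, 0 <= t <= sigma ->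
        x t = x 0 + Rintegral (@lebesgue_measure R) `[0, t] y /\
        y t = y 0 - Rintegral (@lebesgue_measure R) `[0, t]
                       (fun s => lambda * pospart a s * g (x s))].

(** On [[t1, sigma]] the velocity [y] is nonincreasing, because [y'] is minus
    a nonnegative forcing term; hence [y <= y t1 <= - gamma1] there, which gives
    the bound on [y sigma], and integrating [x' = y] over [[t1, sigma]] gives
    [x sigma <= kappa1 - gamma1 (sigma - t1) <= 0]. *)

From HB Require Import structures.
From mathcomp Require Import all_boot all_order all_algebra.
From mathcomp Require Import all_classical all_reals all_analysis.
Import Order.TTheory GRing.Theory Num.Theory.
Import numFieldNormedType.Exports.
Local Open Scope classical_set_scope.
Local Open Scope ring_scope.

Lemma admissible_g_ge0 {R : realType} {g : R -> R} :
  admissible_g g -> forall s, 0 <= g s.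
Proof.
case=> g_out g_in _ _ _ s.
have [s_lt0|s_ge0] := ltP s 0; first by rewrite g_out //; left.
have [s_le1|s_gt1] := leP s 1; first by apply: g_in; rewrite s_ge0 s_le1.
by rewrite g_out //; right.
Qed.

Section interval_integrals.
Context {R : realType}.
Local Notation mu := (@lebesgue_measure R).

Lemma Rintegral_itvcc_sub [f : R -> R] [c b u v : R] :
  mu.-integrable `[c, b] (EFin \o f) -> c <= u -> u <= v -> v <= b ->
  \int[mu]_(s in `[c, v]) f s - \int[mu]_(s in `[c, u]) f s =
  \int[mu]_(s in `]u, v]) f s.
Proof.
move=> intf cu uv vb; apply: Rintegral_itvB; rewrite ?bnd_simp //.
by apply: integrableS intf => //; apply: subset_itvl; rewrite bnd_simp.
Qed.

Lemma Rintegral_itvoc_le_cst [f : R -> R] [u v k : R] :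
  mu.-integrable `]u, v] (EFin \o f) -> u <= v ->
  (forall s, u < s <= v -> f s <= k) ->
  \int[mu]_(s in `]u, v]) f s <= k * (v - u).
Proof.
move=> intf uv fk.
have intk : mu.-integrable `]u, v] (EFin \o cst k).
  have intk_cc : mu.-integrable `[u, v] (EFin \o cst k).
    apply: continuous_compact_integrable; first exact: segment_compact.
    by move=> s; exact: cvg_cst.
  by apply: integrableS intk_cc => //; apply: subset_itvr; rewrite bnd_simp.
have length_uv : fine (mu (`]u, v]%classic : set R)) = v - u.
  rewrite lebesgue_measure_itv /= lte_fin.
  have [//|vu] := ltP u v.
  have -> : v = u by apply: le_anti; rewrite vu uv.
  by rewrite subrr.
apply: (le_trans (le_Rintegral _ intf intk _)).
- exact: measurable_itv.
- by move=> s /= /[!in_itv]/=; exact: fk.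
- by rewrite Rintegral_cst // length_uv.
Qed.

End interval_integrals.

Section caratheodory_solution_monotonicity.
Context {R : realType} {sigma lambda : R} {a g x y : R -> R}.
Hypotheses (lambda_ge0 : 0 <= lambda) (g_ge0 : forall s, 0 <= g s).
Hypothesis sol : caratheodory_solution sigma lambda a g x y.

Lemma caratheodory_solution_y_nonincreasing [u v : R] :
  0 <= u -> u <= v -> v <= sigma -> y v <= y u.
Proof.
case: sol => _ intf xy u0 uv vs.
have v_in : 0 <= v <= sigma by rewrite (le_trans u0 uv) vs.
have u_in : 0 <= u <= sigma by rewrite u0 (le_trans uv vs).
have [_ ->] := xy v v_in.
have [_ ->] := xy u u_in.
rewrite lerD2l lerN2 -subr_ge0 (Rintegral_itvcc_sub intf) //.
apply: Rintegral_ge0 => s _; rewrite !mulr_ge0 //.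
by rewrite /pospart le_max lexx orbT.
Qed.

Lemma caratheodory_solution_x_increment [u v : R] :
  0 <= u -> u <= v -> v <= sigma ->
  x v = x u + \int[@lebesgue_measure R]_(s in `]u, v]) y s.
Proof.
case: sol => inty _ xy u0 uv vs.
have v_in : 0 <= v <= sigma by rewrite (le_trans u0 uv) vs.
have u_in : 0 <= u <= sigma by rewrite u0 (le_trans uv vs).
have [-> _] := xy v v_in.
have [-> _] := xy u u_in.
by rewrite -(Rintegral_itvcc_sub inty) // addrACA subrr addr0.
Qed.

End caratheodory_solution_monotonicity.

Theorem lemma2p1 (R : realType) (sigma lambda kappa1 t1 : R) (a g : R -> R)
  (hsigma : 0 < sigma) (hlambda : 0 < lambda)
  (hkappa : 0 < kappa1 < 1) (ht1 : 0 < t1 < sigma)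
  (ha : (@lebesgue_measure R).-integrable `[0, sigma] (EFin \o a))
  (hg : admissible_g g) :
  forall gamma1 : R, kappa1 / (sigma - t1) <= gamma1 ->
  forall x y : R -> R, caratheodory_solution sigma lambda a g x y ->
  x t1 <= kappa1 -> y t1 <= - gamma1 ->
  x sigma <= 0 /\ y sigma <= - gamma1.
Proof.
move=> gamma1 gamma1_ge x y sol x_t1 y_t1.
have [t1_gt0 t1_lt] := andP ht1.
have y_decr :=
  caratheodory_solution_y_nonincreasing (ltW hlambda) (admissible_g_ge0 hg) sol.
have y_le u : t1 <= u -> u <= sigma -> y u <= - gamma1.
  by move=> t1u us; apply: le_trans y_t1; exact: y_decr (ltW t1_gt0) t1u us.
split; last exact: y_le (ltW t1_lt) (lexx _).
have inty : (@lebesgue_measure R).-integrable `]t1, sigma] (EFin \o y).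
  case: sol => inty _ _; apply: integrableS inty => //.
  by apply: subset_itvr; rewrite bnd_simp ltW.
have int_le :
    \int[@lebesgue_measure R]_(s in `]t1, sigma]) y s <= - gamma1 * (sigma - t1).
  apply: Rintegral_itvoc_le_cst inty (ltW t1_lt) _ => u /andP[t1u us].
  exact: y_le (ltW t1u) us.
rewrite (caratheodory_solution_x_increment sol (ltW t1_gt0) (ltW t1_lt) (lexx _)).
apply: le_trans (lerD x_t1 int_le) _.
by rewrite mulNr subr_le0 -ler_pdivrMr // subr_gt0.
Qed.
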